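(* Let $K$ be a field and $\mathbb M$ a $\mathcal K$-module such that $\mathbb M^*$ is well defined. Then $\mathbb M$ is separated if and only if the natural morphism $\mathbb M\to\mathbb M_{sch}$ is a monomorphism. Consequently, $\mathbb M$ is separated if and only if it is isomorphic to a $\mathcal K$-submodule of a $\mathcal K$-module of the form $\mathcal V^*$ for some $K$-vector space $V$.
   Context: For a commutative ring $R$ (here $R=K$), an $\mathcal R$-module is a covariant functor $\mathbb M$ from commutative $R$-algebras to abelian groups with each $\mathbb M(S)$ an $S$-module, functorially; morphisms are natural transformations $S$-linear on each $S$. For an $R$-module $V$, $\mathcal V(S)=V\otimes_RS$, and $\mathbb M^*(S)=\operatorname{Hom}_{\mathcal S}(\mathbb M_{|S},\mathcal S)$ where $\mathbb M_{|S}$ is restriction to $S$-algebras. $\mathbb M_{sch}$ is the $\mathcal R$-module $\mathbb M_{sch}(S)=\operatorname{Hom}_R(\mathbb M^*(R),S)$, and the natural morphism $\mathbb M\to\mathbb M_{sch}$ sends $m\in\mathbb M(S)$ to $w\mapsto w_S(m)$. $\mathbb M$ is (linearly) separated if the natural morphism $\mathbb M\to\mathbb M^{**}$, $m\mapsto(w\mapsto w(m))$, is a monomorphism, i.e. for each $R$-algebra $S$ and $0\ne m\in\mathbb M(S)$ there are a commutative $S$-algebra $T$ and $w\in\mathbb M^*(T)$ with $w(m)\neq0$. *)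

From HB Require Import structures.
From mathcomp Require Import all_boot all_order all_algebra.
Set Implicit Arguments. Unset Strict Implicit. Unset Printing Implicit Defensive.
Import GRing.Theory.
Local Open Scope ring_scope.

(* Commutative K-algebras are objects of [comAlgType K]; K-algebra morphisms
   are [{lrmorphism S -> T}].  An S-algebra is a K-algebra T together with a
   K-algebra morphism S -> T. *)

Record kmod (K : fieldType) := KMod {
  kobj : forall S : comAlgType K, lmodType S;
  kmap : forall (S T : comAlgType K), {lrmorphism S -> T} -> kobj S -> kobj T;
  kmapD : forall (S T : comAlgType K) (f : {lrmorphism S -> T}) (x y : kobj S),
      kmap f (x + y) = kmap f x + kmap f y;
  kmapZ : forall (S T : comAlgType K) (f : {lrmorphism S -> T}) (s : S) (x : kobj S),
      kmap f (s *: x) = f s *: kmap f x;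
  kmap_id : forall (S : comAlgType K) (f : {lrmorphism S -> S}),
      (forall s, f s = s) -> forall x, kmap f x = x;
  kmap_comp : forall (S T U : comAlgType K) (f : {lrmorphism S -> T})
      (g : {lrmorphism T -> U}) (h : {lrmorphism S -> U}),
      (forall s, h s = g (f s)) -> forall x, kmap h x = kmap g (kmap f x)
}.

Section Dual.
Variables (K : fieldType) (M : kmod K).

(* An element of M^*(S) = Hom_S(M_{|S}, S): a natural family, indexed by the
   S-algebras (T, phi : S -> T), of T-linear maps M(T) -> T. *)
Record dual_pt (S : comAlgType K) := DualPt {
  dev : forall (T : comAlgType K), {lrmorphism S -> T} -> kobj M T -> T;
  devD : forall (T : comAlgType K) (phi : {lrmorphism S -> T}) (x y : kobj M T),
      dev phi (x + y) = dev phi x + dev phi y;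
  devZ : forall (T : comAlgType K) (phi : {lrmorphism S -> T}) (t : T) (x : kobj M T),
      dev phi (t *: x) = t * dev phi x;
  dev_nat : forall (T T' : comAlgType K) (phi : {lrmorphism S -> T})
      (phi' : {lrmorphism S -> T'}) (g : {lrmorphism T -> T'}),
      (forall s, g (phi s) = phi' s) ->
      forall x, dev phi' (kmap g x) = g (dev phi x)
}.

(* "M^* is well defined": every M^*(S) is a set (small), i.e. injects into a
   small type (here: the carrier of some K-vector space). *)
Definition dual_well_defined : Prop :=
  forall S : comAlgType K,
    exists (X : lmodType K) (f : dual_pt S -> X), injective f.

(* Separated: for each S and 0 <> m in M(S) there are an S-algebra
   (T, phi) and w in M^*(T) with w(m) <> 0, where w(m) = w_T(M(phi) m)
   (w evaluated at T, viewed as a T-algebra via the identity). *)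
Definition separated : Prop :=
  forall (S : comAlgType K) (m : kobj M S), m != 0 ->
    exists (T : comAlgType K) (phi : {lrmorphism S -> T}) (w : dual_pt T),
      dev w (idfun : {lrmorphism T -> T}) (kmap phi m) != 0.

Definition Kalg : comAlgType K := K^o.

Fact in_alg_Kalg_scalable (S : comAlgType K) :
  scalable (in_alg S : Kalg -> S).
Proof. by move=> a k; rewrite /GRing.in_alg /= scalerA. Qed.
HB.instance Definition _ (S : comAlgType K) :=
  GRing.isScalable.Build K Kalg S *:%R (in_alg S : Kalg -> S)
    (in_alg_Kalg_scalable S).

(* The natural morphism M -> M_sch at S:
   m |-> (w in M^*(K) |-> w_S(m)), where S is a K-algebra via the structure
   morphism K -> S (in_alg). *)
Definition to_sch (S : comAlgType K) (m : kobj M S) : dual_pt Kalg -> S :=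
  fun w => dev w (in_alg S : {lrmorphism Kalg -> S}) m.

Definition to_sch_mono : Prop :=
  forall S : comAlgType K, injective (@to_sch S).

(* For a K-vector space V, the dual module V^*, V^*(S) = Hom_S(V (x)_K S, S),
   is identified with the standard S-module Hom_K(V, S) (K-linear maps),
   with S-structure (s.phi)(v) = s * phi(v) and functoriality
   V^*(f)(phi) = f o phi.  [M is isomorphic to a K-submodule of V^*] is
   expressed as: there is a monomorphism (componentwise injective morphism of
   K-modules) M -> V^*. *)
Definition embeds_in_vdual (V : lmodType K) : Prop :=
  exists h : forall S : comAlgType K, kobj M S -> V -> S,
    [/\ (* each h_S(m) is K-linear, i.e. lies in V^*(S) *)
        (forall (S : comAlgType K) (m : kobj M S) (a : K) (v w : V),
           h S m (a *: v + w) = a *: h S m v + h S m w),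
        (forall (S : comAlgType K) (s : S) (m m' : kobj M S) (v : V),
           h S (s *: m + m') v = s * h S m v + h S m' v),
        (forall (S T : comAlgType K) (f : {lrmorphism S -> T}) (m : kobj M S) (v : V),
           h T (kmap f m) v = f (h S m v))
      &
        (forall S : comAlgType K, injective (h S))].

End Dual.

From HB Require Import structures.
From mathcomp Require Import all_boot all_order all_algebra.
From mathcomp Require Import boolp classical_sets.
Set Implicit Arguments. Unset Strict Implicit. Unset Printing Implicit Defensive.
Import GRing.Theory.
Local Open Scope ring_scope.
Local Open Scope classical_set_scope.

(* If [M] is separated and [0 <> m in M(S)], some [w in M^*(T)], for an
   S-algebra [phi : S -> T], has [w_T(M(phi) m) <> 0].  Evaluating [w] over the
   T-algebra [T (x)_K S] at the image of [m] gives a tensor [p] that the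
   multiplication map [T (x) S -> T] sends to [w_T(M(phi) m)], so [p <> 0], and
   some linear form [l : T -> K] has [(l (x) id) p <> 0].  Then
   [x |-> (l (x) id)(w_{T (x) R} x)] is a point of [M^*(K)] that does not
   vanish at [m]: [M -> M_sch] is injective.  Conversely, a point of [M^*(K)]
   not vanishing at [m] restricts to a point of [M^*(S)].  For the second
   equivalence, [M_sch] is [V^*] for [V = M^*(K)], and an embedding into some
   [V^*] separates points by evaluation at vectors of [V]. *)

Section SeparatingFunctional.
Variables (K : fieldType) (T : lmodType K).
Implicit Types (U W : set T) (x y v : T).

Definition lin_closed U := forall a x y, U x -> U y -> U (a *: x + y).

Definition scalar_of (f : T -> K) (fL : linear_for *%R f) : {scalar T} :=
  HB.pack f (GRing.isLinear.Build K T K^o *%R f fL).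

Section LinClosed.
Variables (U : set T) (UL : lin_closed U).

Lemma lin_closedZ a x : U 0 -> U x -> U (a *: x).
Proof. by move=> U0 Ux; rewrite -[a *: x]addr0; apply: UL. Qed.

Lemma lin_closedB x y : U x -> U y -> U (x - y).
Proof. by move=> Ux Uy; rewrite -scaleN1r addrC; apply: UL. Qed.

End LinClosed.

(* Taking unions with [W] makes the empty chain harmless in Zorn's lemma. *)
Lemma maximal_lin_closed_avoiding W v : lin_closed W -> W 0 -> ~ W v ->
  exists U, [/\ W `<=` U, lin_closed U, U 0, ~ U v &
    forall x, ~ U x -> exists u c, U u /\ v = u + c *: x].
Proof.
move=> WL W0 nWv.
pose P (A : set T) := lin_closed (A `|` W) /\ ~ (A `|` W) v.
have [A [[AL nAv] Amax]] : exists A, P A /\ forall B, A `<` B -> ~ P B.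
  apply: Zorn_bigcup => F FP Ftot.
  have common x y : (\bigcup_(X in F) X `|` W) x -> (\bigcup_(X in F) X `|` W) y ->
      (W x /\ W y) \/ exists2 X, F X & (X `|` W) x /\ (X `|` W) y.
    case=> [[X FX Xx]|Wx] [[Y FY Yy]|Wy]; last by left.
    - right; have [XY|YX] := Ftot _ _ FX FY.
        by exists Y => //; split; left => //; apply: XY.
      by exists X => //; split; left => //; apply: YX.
    - by right; exists X => //; split; [left|right].
    - by right; exists Y => //; split; [right|left].
  split=> [a x y Ux Uy|[[X FX Xv]|//]]; last by apply: (FP _ FX).2; left.
  case: (common x y Ux Uy) => [[Wx Wy]|[X FX [Xx Xy]]]; first by right; apply: WL.
  by case: ((FP _ FX).1 a x y Xx Xy) => [Xz|Wz]; [left; exists X|right].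
pose U := A `|` W.
have U0 : U 0 by right.
exists U; split=> // [x Wx|x nUx]; first by right.
pose B y := exists u c, U u /\ y = u + c *: x.
have AB : A `<=` B by move=> y Ay; exists y, 0; split; [left|rewrite scale0r addr0].
have BW : (B `|` W) `<=` B.
  by move=> y [//|Wy]; exists y, 0; split; [right|rewrite scale0r addr0].
apply: contrapT => nBv; apply: (Amax B).
  split=> // BA; apply: nUx; left; apply: BA.
  by exists 0, 1; rewrite add0r scale1r.
split=> [a y1 y2 /BW[u1 [c1 [U1 ->]]] /BW[u2 [c2 [U2 ->]]]|[Bv|//]].
  left; exists (a *: u1 + u2), (a * c1 + c2); split; first exact: AL.
  by rewrite scalerDr scalerDl scalerA addrACA.
by case: Bv => u [c [Uu vE]]; apply: nBv; exists u, c.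
Qed.

Lemma separating_functional W v : lin_closed W -> W 0 -> ~ W v ->
  exists l : {scalar T}, (forall x, W x -> l x = 0) /\ l v = 1.
Proof.
move=> WL W0 nWv.
have [U [WU UL U0 nUv Umax]] := maximal_lin_closed_avoiding WL W0 nWv.
have coef_ex x : exists c, U (x - c *: v).
  have [Ux|/Umax[u [c [Uu vE]]]] := pselect (U x).
    by exists 0; rewrite scale0r subr0.
  have c0 : c != 0.
    by apply: contra_notN nUv => /eqP c0; rewrite vE c0 scale0r addr0.
  exists c^-1; rewrite vE scalerDr scalerA mulVf // scale1r opprD addrCA subrr addr0.
  by rewrite -scaleNr; exact: lin_closedZ.
have coef_uniq x c c' : U (x - c *: v) -> U (x - c' *: v) -> c = c'.
  move=> Uc Uc'; apply: contrapT => /eqP; rewrite -subr_eq0 => cc'.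
  have := lin_closedZ UL (c - c')^-1 U0 (lin_closedB UL Uc' Uc).
  have -> : x - c' *: v - (x - c *: v) = (c - c') *: v.
    by rewrite opprB addrC addrA subrK scalerBl.
  by rewrite scalerA mulVf // scale1r.
pose l x := projT1 (cid (coef_ex x)).
have lP x : U (x - l x *: v) := projT2 (cid (coef_ex x)).
have lL : linear_for *%R l.
  move=> a x y; apply: (coef_uniq (a *: x + y)); first exact: lP.
  have -> : a *: x + y - (a * l x + l y) *: v = a *: (x - l x *: v) + (y - l y *: v).
    by rewrite scalerDl -scalerA scalerBr opprD addrACA.
  exact/UL/lP/lP.
exists (scalar_of lL); split=> [x Wx|] /=.
  by apply: (coef_uniq x); [exact: lP | rewrite scale0r subr0; apply: WU].
by apply: (coef_uniq v); [exact: lP | rewrite scale1r subrr].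
Qed.

Lemma exists_scalar_eq1 v : v != 0 -> exists l : {scalar T}, l v = 1.
Proof.
move=> /eqP v0; have W0L : lin_closed [set 0] by move=> a x y -> ->; rewrite scaler0 addr0.
by have [l [_ lv]] := separating_functional W0L erefl v0; exists l.
Qed.

End SeparatingFunctional.

Section BilinearVanishing.
Variables (K : fieldType) (T S Y : lmodType K).

Definition contract (z : seq (T * S)) (l : {scalar T}) : S :=
  \sum_(p <- z) l p.1 *: p.2.

Lemma contract_cons t s z l : contract ((t, s) :: z) l = l t *: s + contract z l.
Proof. by rewrite /contract big_cons. Qed.

Lemma contract1 t s l : contract [:: (t, s)] l = l t *: s.
Proof. by rewrite /contract big_seq1. Qed.

Lemma contract_cat z z' l : contract (z ++ z') l = contract z l + contract z' l.
Proof. by rewrite /contract big_cat. Qed.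

Definition scale_seq (k : K) (z : seq (T * S)) := [seq (k *: p.1, p.2) | p <- z].

Lemma contract_scale k z l : contract (scale_seq k z) l = k *: contract z l.
Proof.
rewrite /contract big_map scaler_sumr; apply: eq_bigr => p _.
by rewrite linearZ scalerA.
Qed.

Fixpoint in_span (ts : seq T) (x : T) : Prop :=
  if ts is t :: ts' then exists c, in_span ts' (x - c *: t) else x = 0.

Lemma in_span0 ts : in_span ts 0.
Proof. by elim: ts => [|t ts IH] //=; exists 0; rewrite scale0r subr0. Qed.

Lemma lin_closed_span ts : lin_closed (in_span ts).
Proof.
elim: ts => [|t ts IH] a x y /=; first by move=> -> ->; rewrite scaler0 addr0.
move=> [c1 H1] [c2 H2]; exists (a * c1 + c2).
have -> : a *: x + y - (a * c1 + c2) *: t = a *: (x - c1 *: t) + (y - c2 *: t).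
  by rewrite scalerDl -scalerA scalerBr opprD addrACA.
exact: IH.
Qed.

Lemma mem_span ts t : t \in ts -> in_span ts t.
Proof.
elim: ts => [|u ts IH] //=; rewrite inE => /orP[/eqP ->|/IH tsp].
  by exists 1; rewrite scale1r subrr; apply: in_span0.
by exists 0; rewrite scale0r subr0.
Qed.

Variable B : T -> S -> Y.
Hypotheses (BlL : forall s, linear (B^~ s)) (BrL : forall t, linear (B t)).

Let B0l s : B 0 s = 0 :=
  linear0 (HB.pack (B^~ s) (GRing.isLinear.Build K T Y _ _ (BlL s))).
Let B0r t : B t 0 = 0 :=
  linear0 (HB.pack (B t) (GRing.isLinear.Build K S Y _ _ (BrL t))).

Definition bilin_sum (z : seq (T * S)) : Y := \sum_(p <- z) B p.1 p.2.

Lemma bilin_sum_cons t s z : bilin_sum ((t, s) :: z) = B t s + bilin_sum z.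
Proof. by rewrite /bilin_sum big_cons. Qed.

(* Rewriting [t = c t1 + (t - c t1)] moves the term [t (x) s] onto the
   earlier entries [t1 (x) s1] without changing the size of the list. *)
Lemma shift_into_span r t s : in_span (map fst r) t ->
  exists r', [/\ size r' = size r,
    forall l, contract r' l = l t *: s + contract r l &
    bilin_sum r' = B t s + bilin_sum r].
Proof.
have swap (V : zmodType) (a b d e : V) : a + b + (d - b + e) = d + (a + e).
  by rewrite [d - b + e]addrAC addrACA subrr addr0 addrCA.
elim: r t => [|[t1 s1] r IH] t /=.
  move=> ->; exists [::]; split=> // [l|].
    by rewrite /contract big_nil linear0 scale0r addr0.
  by rewrite /bilin_sum big_nil B0l addr0.
move=> [c /IH[r' [sz Hl Hb]]]; exists ((t1, s1 + c *: s) :: r'); split=> /=.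
- by rewrite sz.
- move=> l; rewrite !contract_cons Hl linearB scalarZ.
  by rewrite scalerDr scalerA scalerBl [l t1 * c]mulrC swap.
- rewrite !bilin_sum_cons Hb.
  have -> : B t1 (s1 + c *: s) = B t1 s1 + c *: B t1 s by rewrite addrC BrL addrC.
  have -> : B (t - c *: t1) s = B t s - c *: B t1 s.
    by rewrite addrC -scaleNr BlL scaleNr addrC.
  by rewrite swap.
Qed.

(* A tensor [sum t_i (x) s_i] killed by every [l (x) id] is killed by every
   bilinear map: if [t] is in the span of the other [t_i], shift it away;
   otherwise a functional separating [t] from that span shows [s = 0]. *)
Lemma bilin_sum_eq0 z : (forall l, contract z l = 0) -> bilin_sum z = 0.
Proof.
move: {2}(size z) (erefl (size z)) => n; elim: n z => [|n IH] [|[t s] r] //=.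
  by rewrite /bilin_sum big_nil.
move=> [] sz z0; case: (pselect (in_span (map fst r) t)) => [tr|ntr].
  have [r' [sz' Hl Hb]] := shift_into_span s tr.
  rewrite bilin_sum_cons -Hb; apply: IH => [|l]; first by rewrite sz'.
  by rewrite Hl -contract_cons.
have [l [lr lt]] := separating_functional (@lin_closed_span _) (in_span0 _) ntr.
have contract_r : contract r l = 0.
  rewrite /contract big_seq big1 // => p pr.
  by rewrite lr ?scale0r //; apply/mem_span/map_f.
have s0 : s = 0 by have := z0 l; rewrite contract_cons lt scale1r contract_r addr0.
rewrite bilin_sum_cons s0 B0r add0r; apply: IH => // l'.
by have := z0 l'; rewrite contract_cons s0 scaler0 add0r.
Qed.

Lemma bilin_sum_eq z z' : contract z =1 contract z' -> bilin_sum z = bilin_sum z'.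
Proof.
move=> zz'; apply/eqP; rewrite -subr_eq0; apply/eqP.
have -> : bilin_sum z - bilin_sum z' = bilin_sum (z ++ scale_seq (-1) z').
  rewrite /bilin_sum big_cat big_map /= -sumrN.
  by congr (_ + _); apply: eq_bigr => p _; rewrite -[_ *: _]addr0 BlL B0l addr0 scaleN1r.
by apply: bilin_sum_eq0 => l; rewrite contract_cat contract_scale zz' scaleN1r subrr.
Qed.

End BilinearVanishing.

Section TensorAlgebra.
Variables (K : fieldType) (T R : comAlgType K).
Implicit Types (z : seq (T * R)) (l : {scalar T}).

(* [T (x)_K R] is modelled by its image in the maps [{scalar T} -> R], where
   [t (x) r] is sent to [l |-> l t *: r]; that this loses nothing is
   [bilin_sum_eq]. *)
Definition tensor := {f : {scalar T} -> R | exists z, f = contract z}.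
HB.instance Definition _ := gen_eqMixin tensor.
HB.instance Definition _ := gen_choiceMixin tensor.

Definition tensor_of z : tensor := exist _ (contract z) (ex_intro _ z erefl).
Definition tensor_seq (p : tensor) : seq (T * R) := projT1 (cid (proj2_sig p)).
Definition slice (p : tensor) l : R := proj1_sig p l.

Lemma tensor_eq (p q : tensor) : slice p =1 slice q -> p = q.
Proof. by case: p q => [f fP] [g gP] /funext fg; apply: eq_exist. Qed.

Lemma slice_tensor_of z l : slice (tensor_of z) l = contract z l.
Proof. by []. Qed.

Lemma contract_tensor_seq p : contract (tensor_seq p) =1 slice p.
Proof. by rewrite /slice (projT2 (cid (proj2_sig p))). Qed.

Lemma tensor_of_eq z z' : contract z =1 contract z' -> tensor_of z = tensor_of z'.
Proof. by move=> zz'; apply: tensor_eq => l; apply: zz'. Qed.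

Lemma tensor_seqK p : tensor_of (tensor_seq p) = p.
Proof. exact/tensor_eq/contract_tensor_seq. Qed.

Lemma tensor_of_ind (P : tensor -> Prop) : (forall z, P (tensor_of z)) -> forall p, P p.
Proof. by move=> Pz p; rewrite -(tensor_seqK p). Qed.

Definition mul_seq z z' := [seq (x.1 * y.1, x.2 * y.2) | x <- z, y <- z'].

Definition tensor_add p q := tensor_of (tensor_seq p ++ tensor_seq q).
Definition tensor_scale k p := tensor_of (scale_seq k (tensor_seq p)).
Definition tensor_mul p q := tensor_of (mul_seq (tensor_seq p) (tensor_seq q)).

Lemma tensor_of_add z z' : tensor_add (tensor_of z) (tensor_of z') = tensor_of (z ++ z').
Proof. by apply: tensor_of_eq => l; rewrite !contract_cat !contract_tensor_seq. Qed.

Lemma tensor_of_scale k z : tensor_scale k (tensor_of z) = tensor_of (scale_seq k z).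
Proof. by apply: tensor_of_eq => l; rewrite !contract_scale contract_tensor_seq. Qed.

Lemma mull_scalar_linear l t : linear_for *%R (fun x => l (t * x)).
Proof. by move=> a x y; rewrite mulrDr -scalerAr linearP. Qed.

Definition mull_scalar l t : {scalar T} := scalar_of (mull_scalar_linear l t).

Lemma contract_mul_seq z z' l :
  contract (mul_seq z z') l = \sum_(x <- z) x.2 * contract z' (mull_scalar l x.1).
Proof.
rewrite /contract big_allpairs_dep; apply: eq_bigr => x _.
by rewrite mulr_sumr; apply: eq_bigr => y _; rewrite scalerAr.
Qed.

Lemma contract_mul_seqC z z' : contract (mul_seq z z') =1 contract (mul_seq z' z).
Proof.
move=> l; rewrite /contract !big_allpairs_dep exchange_big.
by apply: eq_bigr => y _; apply: eq_bigr => x _; rewrite mulrC [x.2 * _]mulrC.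
Qed.

Lemma contract_mul_seq_eq z1 z1' z2 z2' : contract z1 =1 contract z1' ->
  contract z2 =1 contract z2' -> contract (mul_seq z1 z2) =1 contract (mul_seq z1' z2').
Proof.
have right_eq x y y' : contract y =1 contract y' ->
    contract (mul_seq x y) =1 contract (mul_seq x y').
  by move=> yy' l; rewrite !contract_mul_seq; apply: eq_bigr => a _; rewrite yy'.
move=> z11 z22 l; rewrite (right_eq _ _ _ z22) contract_mul_seqC.
by rewrite (right_eq _ _ _ z11) contract_mul_seqC.
Qed.

Lemma tensor_of_mul z z' : tensor_mul (tensor_of z) (tensor_of z') = tensor_of (mul_seq z z').
Proof. by apply/tensor_of_eq/contract_mul_seq_eq; apply: contract_tensor_seq. Qed.

Definition tensor_zero := tensor_of [::].
Definition tensor_opp := tensor_scale (-1).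
Definition tensor_one := tensor_of [:: (1, 1)].

Lemma slice_add p q l : slice (tensor_add p q) l = slice p l + slice q l.
Proof. by rewrite slice_tensor_of contract_cat !contract_tensor_seq. Qed.

Lemma slice_scale k p l : slice (tensor_scale k p) l = k *: slice p l.
Proof. by rewrite slice_tensor_of contract_scale contract_tensor_seq. Qed.

Lemma slice_zero l : slice tensor_zero l = 0.
Proof. exact: big_nil. Qed.

Lemma tensor_addA : associative tensor_add.
Proof. by move=> p q r; apply: tensor_eq => l; rewrite !slice_add addrA. Qed.

Lemma tensor_addC : commutative tensor_add.
Proof. by move=> p q; apply: tensor_eq => l; rewrite !slice_add addrC. Qed.

Lemma tensor_add0 : left_id tensor_zero tensor_add.
Proof. by move=> p; apply: tensor_eq => l; rewrite slice_add slice_zero add0r. Qed.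

Lemma tensor_addN : left_inverse tensor_zero tensor_opp tensor_add.
Proof.
move=> p; apply: tensor_eq => l.
by rewrite slice_add slice_scale scaleN1r addNr slice_zero.
Qed.

HB.instance Definition _ :=
  GRing.isZmodule.Build tensor tensor_addA tensor_addC tensor_add0 tensor_addN.

Lemma tensor_mulA : associative tensor_mul.
Proof.
move=> p q r; elim/tensor_of_ind: p => x; elim/tensor_of_ind: q => y.
elim/tensor_of_ind: r => z; rewrite !tensor_of_mul; apply: tensor_of_eq => l.
rewrite /contract /mul_seq !big_allpairs_dep; apply: eq_bigr => a _.
rewrite big_allpairs_dep; apply: eq_bigr => b _.
by apply: eq_bigr => c _ /=; rewrite !mulrA.
Qed.

Lemma tensor_mulC : commutative tensor_mul.
Proof.
move=> p q; elim/tensor_of_ind: p => x; elim/tensor_of_ind: q => y.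
by rewrite !tensor_of_mul; apply/tensor_of_eq/contract_mul_seqC.
Qed.

Lemma tensor_mul1 : left_id tensor_one tensor_mul.
Proof.
move=> p; elim/tensor_of_ind: p => x; rewrite tensor_of_mul.
apply: tensor_of_eq => l; rewrite /contract /mul_seq big_allpairs_dep big_seq1.
by apply: eq_bigr => y _ /=; rewrite !mul1r.
Qed.

Lemma tensor_mulDl : left_distributive tensor_mul tensor_add.
Proof.
move=> p q r; elim/tensor_of_ind: p => x; elim/tensor_of_ind: q => y.
elim/tensor_of_ind: r => z; rewrite tensor_of_add !tensor_of_mul tensor_of_add.
by apply: tensor_of_eq => l; rewrite /contract /mul_seq big_cat !big_allpairs_dep big_cat.
Qed.

Lemma tensor_one_neq0 : tensor_one != 0.
Proof.
apply/eqP => /(congr1 (slice^~ _)) one0.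
have [l l1] := exists_scalar_eq1 (oner_neq0 T).
have := one0 l; rewrite slice_zero slice_tensor_of contract1 l1 scale1r.
by move=> /eqP; rewrite oner_eq0.
Qed.

HB.instance Definition _ := GRing.Zmodule_isComNzRing.Build tensor
  tensor_mulA tensor_mulC tensor_mul1 tensor_mulDl tensor_one_neq0.

Lemma tensor_scaleA a b p : tensor_scale a (tensor_scale b p) = tensor_scale (a * b) p.
Proof. by apply: tensor_eq => l; rewrite !slice_scale scalerA. Qed.

Lemma tensor_scale1 : left_id 1 tensor_scale.
Proof. by move=> p; apply: tensor_eq => l; rewrite slice_scale scale1r. Qed.

Lemma tensor_scaleDr : right_distributive tensor_scale +%R.
Proof.
move=> a p q; apply: tensor_eq => l.
by rewrite slice_scale !slice_add !slice_scale scalerDr.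
Qed.

Lemma tensor_scaleDl p : {morph tensor_scale^~ p : a b / a + b}.
Proof. by move=> a b; apply: tensor_eq => l; rewrite slice_add !slice_scale scalerDl. Qed.

HB.instance Definition _ := GRing.Zmodule_isLmodule.Build K tensor
  tensor_scaleA tensor_scale1 tensor_scaleDr tensor_scaleDl.

Lemma tensor_ofD z z' : tensor_of z + tensor_of z' = tensor_of (z ++ z').
Proof. exact: tensor_of_add. Qed.

Lemma tensor_ofZ k z : k *: tensor_of z = tensor_of (scale_seq k z).
Proof. exact: tensor_of_scale. Qed.

Lemma tensor_ofM z z' : tensor_of z * tensor_of z' = tensor_of (mul_seq z z').
Proof. exact: tensor_of_mul. Qed.

Lemma slice0 l : slice (0 : tensor) l = 0.
Proof. exact: slice_zero. Qed.

Lemma sliceD p q l : slice (p + q) l = slice p l + slice q l.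
Proof. exact: slice_add. Qed.

Lemma sliceZ k p l : slice (k *: p) l = k *: slice p l.
Proof. exact: slice_scale. Qed.

Lemma tensor_scaleAl a (p q : tensor) : a *: (p * q) = (a *: p) * q.
Proof.
elim/tensor_of_ind: p => x; elim/tensor_of_ind: q => y.
rewrite tensor_ofM !tensor_ofZ tensor_ofM; apply: tensor_of_eq => l.
rewrite contract_scale /contract /mul_seq !big_allpairs_dep big_map scaler_sumr.
apply: eq_bigr => a' _; rewrite scaler_sumr; apply: eq_bigr => b _ /=.
by rewrite -scalerAl scalarZ scalerA.
Qed.

HB.instance Definition _ := GRing.Lmodule_isLalgebra.Build K tensor tensor_scaleAl.
HB.instance Definition _ := GRing.Lalgebra_isComAlgebra.Build K tensor.

End TensorAlgebra.

Section TensorMorphisms.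
Variables (K : fieldType) (T R : comAlgType K).
Implicit Types (z : seq (T * R)) (l : {scalar T}) (p q : tensor T R).

Definition tensor_inl (t : T) : tensor T R := tensor_of [:: (t, 1)].
Definition tensor_inr (r : R) : tensor T R := tensor_of [:: (1, r)].

Lemma slice_inl t l : slice (tensor_inl t) l = l t *: 1.
Proof. exact: contract1. Qed.

Lemma slice_inr r l : slice (tensor_inr r) l = l 1 *: r.
Proof. exact: contract1. Qed.

Lemma tensor_inl_linear : linear tensor_inl.
Proof.
move=> a x y; apply: tensor_eq => l.
by rewrite sliceD sliceZ !slice_inl linearP scalerDl scalerA.
Qed.

Lemma tensor_inl_monoid_morphism : monoid_morphism tensor_inl.
Proof.
split=> // x y; rewrite tensor_ofM; apply: tensor_of_eq => l.
by rewrite /mul_seq /= mulr1.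
Qed.

HB.instance Definition _ :=
  GRing.isLinear.Build K T (tensor T R) _ tensor_inl tensor_inl_linear.
HB.instance Definition _ :=
  GRing.isMonoidMorphism.Build T (tensor T R) tensor_inl tensor_inl_monoid_morphism.

Lemma tensor_inr_linear : linear tensor_inr.
Proof.
move=> a x y; apply: tensor_eq => l.
by rewrite sliceD sliceZ !slice_inr scalerDr !scalerA mulrC.
Qed.

Lemma tensor_inr_monoid_morphism : monoid_morphism tensor_inr.
Proof.
split=> // x y; rewrite tensor_ofM; apply: tensor_of_eq => l.
by rewrite /mul_seq /= mulr1.
Qed.

HB.instance Definition _ :=
  GRing.isLinear.Build K R (tensor T R) _ tensor_inr tensor_inr_linear.
HB.instance Definition _ :=
  GRing.isMonoidMorphism.Build R (tensor T R) tensor_inr tensor_inr_monoid_morphism.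

Lemma slice_inrM r p l : slice (tensor_inr r * p) l = r * slice p l.
Proof.
elim/tensor_of_ind: p => z; rewrite tensor_ofM slice_tensor_of.
rewrite /contract /mul_seq big_allpairs_dep big_seq1 mulr_sumr.
by apply: eq_bigr => y _ /=; rewrite mul1r scalerAr.
Qed.

End TensorMorphisms.

Section TensorMap.
Variables (K : fieldType) (T R R' : comAlgType K) (g : {lrmorphism R -> R'}).
Implicit Types (z : seq (T * R)) (l : {scalar T}) (p q : tensor T R).

Definition map_seq z := [seq (x.1, g x.2) | x <- z].

Definition tensor_map p : tensor T R' := tensor_of (map_seq (tensor_seq p)).

Lemma contract_map_seq z l : contract (map_seq z) l = g (contract z l).
Proof.
rewrite /contract big_map rmorph_sum; apply: eq_bigr => x _.
by rewrite /= linearZ_LR.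
Qed.

Lemma slice_map p l : slice (tensor_map p) l = g (slice p l).
Proof. by rewrite slice_tensor_of contract_map_seq contract_tensor_seq. Qed.

Lemma tensor_map_of z : tensor_map (tensor_of z) = tensor_of (map_seq z).
Proof. by apply: tensor_eq => l; rewrite slice_map !slice_tensor_of contract_map_seq. Qed.

Lemma tensor_map_linear : linear tensor_map.
Proof.
by move=> a p q; apply: tensor_eq => l; rewrite sliceD sliceZ !slice_map sliceD sliceZ linearP.
Qed.

Lemma tensor_map_monoid_morphism : monoid_morphism tensor_map.
Proof.
split=> [|p q].
  by apply: tensor_eq => l; rewrite slice_map !slice_inl linearZ rmorph1.
elim/tensor_of_ind: p => x; elim/tensor_of_ind: q => y.
rewrite tensor_ofM !tensor_map_of tensor_ofM; apply: tensor_of_eq => l.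
rewrite /contract /mul_seq /map_seq big_map !big_allpairs_dep big_map.
apply: eq_bigr => a _; rewrite big_map; apply: eq_bigr => b _ /=.
by rewrite rmorphM.
Qed.

HB.instance Definition _ :=
  GRing.isLinear.Build K (tensor T R) (tensor T R') _ tensor_map tensor_map_linear.
HB.instance Definition _ := GRing.isMonoidMorphism.Build (tensor T R) (tensor T R')
  tensor_map tensor_map_monoid_morphism.

Lemma tensor_map_inl t : tensor_map (tensor_inl R t) = tensor_inl R' t.
Proof. by apply: tensor_eq => l; rewrite slice_map !slice_inl linearZ rmorph1. Qed.

Lemma tensor_map_inr r : tensor_map (tensor_inr T r) = tensor_inr T (g r).
Proof. by apply: tensor_eq => l; rewrite slice_map !slice_inr linearZ. Qed.

End TensorMap.

Section TensorMult.
Variables (K : fieldType) (T S : comAlgType K) (phi : {lrmorphism S -> T}).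
Implicit Types (z : seq (T * S)) (p q : tensor T S).

Let mul_phi (t : T) (s : S) := t * phi s.

Let mul_phi_linearl s : linear (mul_phi^~ s).
Proof. by move=> a x y; rewrite /mul_phi mulrDl scalerAl. Qed.

Let mul_phi_linearr t : linear (mul_phi t).
Proof. by move=> a x y; rewrite /mul_phi linearP mulrDr scalerAr. Qed.

Definition tensor_mult p : T := \sum_(x <- tensor_seq p) x.1 * phi x.2.

Lemma tensor_mult_of z : tensor_mult (tensor_of z) = \sum_(x <- z) x.1 * phi x.2.
Proof.
exact: (bilin_sum_eq mul_phi_linearl mul_phi_linearr (contract_tensor_seq (tensor_of z))).
Qed.

Lemma tensor_mult_linear : linear tensor_mult.
Proof.
move=> a p q; elim/tensor_of_ind: p => x; elim/tensor_of_ind: q => y.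
rewrite tensor_ofZ tensor_ofD !tensor_mult_of big_cat big_map scaler_sumr /=.
by congr (_ + _); apply: eq_bigr => u _; rewrite scalerAl.
Qed.

Lemma tensor_mult_monoid_morphism : monoid_morphism tensor_mult.
Proof.
split=> [|p q]; first by rewrite tensor_mult_of big_seq1 /= rmorph1 mulr1.
elim/tensor_of_ind: p => x; elim/tensor_of_ind: q => y.
rewrite tensor_ofM !tensor_mult_of big_allpairs_dep mulr_suml; apply: eq_bigr => a _.
by rewrite mulr_sumr; apply: eq_bigr => b _; rewrite mulrACA /= rmorphM.
Qed.

HB.instance Definition _ :=
  GRing.isLinear.Build K (tensor T S) T _ tensor_mult tensor_mult_linear.
HB.instance Definition _ :=
  GRing.isMonoidMorphism.Build (tensor T S) T tensor_mult tensor_mult_monoid_morphism.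

Lemma tensor_mult_inl t : tensor_mult (tensor_inl S t) = t.
Proof. by rewrite tensor_mult_of big_seq1 rmorph1 mulr1. Qed.

Lemma tensor_mult_inr s : tensor_mult (tensor_inr T s) = phi s.
Proof. by rewrite tensor_mult_of big_seq1 mul1r. Qed.

End TensorMult.

Section DualPoints.
Variables (K : fieldType) (M : kmod K).

Lemma dev0 (S T : comAlgType K) (w : dual_pt M S) (phi : {lrmorphism S -> T}) :
  dev w phi 0 = 0.
Proof. by apply: (addIr (dev w phi 0)); rewrite -devD !add0r. Qed.

Lemma devB (S T : comAlgType K) (w : dual_pt M S) (phi : {lrmorphism S -> T}) x y :
  dev w phi (x - y) = dev w phi x - dev w phi y.
Proof. by rewrite devD -scaleN1r devZ mulN1r. Qed.

Lemma dual_ext (S : comAlgType K) (w1 w2 : dual_pt M S) :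
  (forall (T : comAlgType K) (phi : {lrmorphism S -> T}), dev w1 phi =1 dev w2 phi) ->
  w1 = w2.
Proof.
case: w1 w2 => [d1 D1 Z1 N1] [d2 D2 Z2 N2] /= d12.
have d1E : d1 = d2.
  by apply: functional_extensionality_dep => T; apply/funext => phi; apply/funext.
by subst d2; congr DualPt; apply: Prop_irrelevance.
Qed.

Definition dual_restr (S : comAlgType K) (w : dual_pt M (Kalg K)) : dual_pt M S :=
  @DualPt K M S (fun T _ => dev w (in_alg T : {lrmorphism Kalg K -> T}))
    (fun T _ => devD w _) (fun T _ => devZ w _)
    (fun T T' _ _ g _ => dev_nat w (phi := in_alg T) (phi' := in_alg T') (rmorph_alg g)).

Lemma to_sch_mono_separated : to_sch_mono M -> separated M.
Proof.
move=> mono S m m0; have [w wm] : exists w, to_sch m w != 0.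
  apply: contra_notP (negP m0) => wm0; apply/eqP/mono/funext => w.
  by rewrite /to_sch dev0; apply/eqP; apply: contra_notT wm0; exists w.
by exists S, idfun, (dual_restr S w); rewrite /= kmap_id.
Qed.

Section TensorExtension.
Variables (T : comAlgType K) (w : dual_pt M T) (l : {scalar T}).

(* The point of [M^*(K)] sending [x in M(R)] to [(l (x) id) (w_{T (x) R} x)];
   a K-algebra has only one structure map [K -> R], so it is ignored. *)
Definition tensor_dev (R : comAlgType K) (_ : {lrmorphism Kalg K -> R}) (x : kobj M R) :=
  slice (dev w (tensor_inl R : {lrmorphism T -> tensor T R}) (kmap (@tensor_inr _ T R) x)) l.

Lemma tensor_devD (R : comAlgType K) (psi : {lrmorphism Kalg K -> R}) x y :
  tensor_dev psi (x + y) = tensor_dev psi x + tensor_dev psi y.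
Proof. by rewrite /tensor_dev kmapD devD sliceD. Qed.

Lemma tensor_devZ (R : comAlgType K) (psi : {lrmorphism Kalg K -> R}) (r : R) x :
  tensor_dev psi (r *: x) = r * tensor_dev psi x.
Proof. by rewrite /tensor_dev kmapZ devZ slice_inrM. Qed.

Lemma tensor_dev_nat (R R' : comAlgType K) (psi : {lrmorphism Kalg K -> R})
    (psi' : {lrmorphism Kalg K -> R'}) (g : {lrmorphism R -> R'}) :
  (forall k, g (psi k) = psi' k) ->
  forall x, tensor_dev psi' (kmap g x) = g (tensor_dev psi x).
Proof.
move=> _ x; rewrite /tensor_dev -(slice_map g).
pose h := tensor_map g \o @tensor_inr _ T R.
rewrite -(kmap_comp (f := g) (g := @tensor_inr _ T R') (h := h)); last exact: tensor_map_inr.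
rewrite (kmap_comp (f := @tensor_inr _ T R) (g := tensor_map g) (h := h)) //.
by rewrite (dev_nat w (phi := tensor_inl R)) // => t; apply: tensor_map_inl.
Qed.

Definition tensor_dual : dual_pt M (Kalg K) :=
  DualPt tensor_devD tensor_devZ tensor_dev_nat.

End TensorExtension.

(* The multiplication map [T (x) S -> T] sends [p] to [w_T(M(phi) m) <> 0];
   a slice [(l (x) id) p <> 0] is then the value at [m] of [tensor_dual w l]. *)
Lemma to_sch_neq0 (S T : comAlgType K) (phi : {lrmorphism S -> T}) (w : dual_pt M T)
    (m : kobj M S) :
  dev w idfun (kmap phi m) != 0 -> exists w', to_sch m w' != 0.
Proof.
pose p := dev w (tensor_inl S : {lrmorphism T -> tensor T S}) (kmap (@tensor_inr _ T S) m).
have mult_p : tensor_mult phi p = dev w idfun (kmap phi m).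
  rewrite (kmap_comp (f := @tensor_inr _ T S) (g := tensor_mult phi) (h := phi)).
    by rewrite (dev_nat w (phi := tensor_inl S)) // => t; apply: tensor_mult_inl.
  by move=> s; exact: (esym (tensor_mult_inr phi s)).
move=> wm0; have [l pl] : exists l, slice p l != 0.
  apply: contrapT => slices0; move: wm0; rewrite -mult_p.
  suff -> : p = 0 by rewrite rmorph0 eqxx.
  apply: tensor_eq => l; rewrite slice0; apply: contrapT => pl.
  by apply: slices0; exists l; apply/eqP.
by exists (tensor_dual w l).
Qed.

Lemma separated_to_sch_mono : separated M -> to_sch_mono M.
Proof.
move=> sep S m1 m2 m12; apply/eqP; rewrite -subr_eq0; apply: contraT => m0.
have [T [phi [w /to_sch_neq0[w' ]]]] := sep S _ m0.
by rewrite /to_sch devB -!/(to_sch _ w') m12 subrr eqxx.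
Qed.

Section DualVectorSpace.
Variable S : comAlgType K.
Implicit Types (w : dual_pt M S) (a b : K).

Definition dual_zero : dual_pt M S.
Proof.
refine (@DualPt K M S (fun T phi x => 0) _ _ _).
- by move=> *; rewrite addr0.
- by move=> *; rewrite mulr0.
- by move=> *; rewrite rmorph0.
Defined.

Definition dual_add w1 w2 : dual_pt M S.
Proof.
refine (@DualPt K M S (fun T phi x => dev w1 phi x + dev w2 phi x) _ _ _).
- by move=> T phi x y; rewrite !devD addrACA.
- by move=> T phi t x; rewrite !devZ mulrDr.
- by move=> T T' phi phi' g gphi x; rewrite !(dev_nat _ gphi) rmorphD.
Defined.

Definition dual_scale a w : dual_pt M S.
Proof.
refine (@DualPt K M S (fun T phi x => a *: dev w phi x) _ _ _).
- by move=> T phi x y; rewrite devD scalerDr.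
- by move=> T phi t x; rewrite devZ scalerAr.
- by move=> T T' phi phi' g gphi x; rewrite (dev_nat _ gphi) linearZ_LR.
Defined.

Lemma dual_addA w1 w2 w3 : dual_add w1 (dual_add w2 w3) = dual_add (dual_add w1 w2) w3.
Proof. by apply: dual_ext => * ? /=; rewrite addrA. Qed.

Lemma dual_addC w1 w2 : dual_add w1 w2 = dual_add w2 w1.
Proof. by apply: dual_ext => * ? /=; rewrite addrC. Qed.

Lemma dual_add0 w : dual_add dual_zero w = w.
Proof. by apply: dual_ext => * ? /=; rewrite add0r. Qed.

Lemma dual_addN w : dual_add (dual_scale (-1) w) w = dual_zero.
Proof. by apply: dual_ext => * ? /=; rewrite scaleN1r addNr. Qed.

Lemma dual_scaleA a b w : dual_scale a (dual_scale b w) = dual_scale (a * b) w.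
Proof. by apply: dual_ext => * ? /=; rewrite scalerA. Qed.

Lemma dual_scale1 w : dual_scale 1 w = w.
Proof. by apply: dual_ext => * ? /=; rewrite scale1r. Qed.

Lemma dual_scaleDr a w1 w2 :
  dual_scale a (dual_add w1 w2) = dual_add (dual_scale a w1) (dual_scale a w2).
Proof. by apply: dual_ext => * ? /=; rewrite scalerDr. Qed.

Lemma dual_scaleDl a b w : dual_scale (a + b) w = dual_add (dual_scale a w) (dual_scale b w).
Proof. by apply: dual_ext => * ? /=; rewrite scalerDl. Qed.

(* [dual_pt M S] lives in a larger universe than the carriers of [lmodType K];
   its K-vector space structure is carried over to its image under an
   injection into a small type. *)
Section SmallCopy.
Variables (X : lmodType K) (f : dual_pt M S -> X) (f_inj : injective f).

Definition small_dual of injective f := {x : X | exists w, f w = x}.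
Local Notation V := (small_dual f_inj).
HB.instance Definition _ := gen_eqMixin V.
HB.instance Definition _ := gen_choiceMixin V.

Definition to_dual (v : V) : dual_pt M S := projT1 (cid (proj2_sig v)).
Definition of_dual w : V := exist _ (f w) (ex_intro _ w erefl).

Lemma of_dualK : cancel of_dual to_dual.
Proof. by move=> w; apply: f_inj; rewrite (projT2 (cid (proj2_sig (of_dual w)))). Qed.

Lemma to_dualK : cancel to_dual of_dual.
Proof. by case=> x xP; apply: eq_exist; rewrite /= (projT2 (cid xP)). Qed.

Definition small_add (u v : V) := of_dual (dual_add (to_dual u) (to_dual v)).
Definition small_scale a (u : V) := of_dual (dual_scale a (to_dual u)).

Lemma small_addA : associative small_add.
Proof. by move=> u v v'; rewrite /small_add !of_dualK dual_addA. Qed.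

Lemma small_addC : commutative small_add.
Proof. by move=> u v; rewrite /small_add dual_addC. Qed.

Lemma small_add0 : left_id (of_dual dual_zero) small_add.
Proof. by move=> u; rewrite /small_add of_dualK dual_add0 to_dualK. Qed.

Lemma small_addN : left_inverse (of_dual dual_zero) (small_scale (-1)) small_add.
Proof. by move=> u; rewrite /small_add /small_scale of_dualK dual_addN. Qed.

HB.instance Definition _ :=
  GRing.isZmodule.Build V small_addA small_addC small_add0 small_addN.

Lemma small_scaleA a b (v : V) : small_scale a (small_scale b v) = small_scale (a * b) v.
Proof. by rewrite /small_scale of_dualK dual_scaleA. Qed.

Lemma small_scale1 : left_id 1 small_scale.
Proof. by move=> v; rewrite /small_scale dual_scale1 to_dualK. Qed.

Lemma small_scaleDr : right_distributive small_scale +%R.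
Proof.
move=> a u v; change (small_scale a (small_add u v) =
  small_add (small_scale a u) (small_scale a v)).
by rewrite /small_scale /small_add !of_dualK dual_scaleDr.
Qed.

Lemma small_scaleDl (v : V) : {morph small_scale^~ v : a b / a + b}.
Proof.
move=> a b; change (small_scale (a + b) v = small_add (small_scale a v) (small_scale b v)).
by rewrite /small_scale /small_add !of_dualK dual_scaleDl.
Qed.

HB.instance Definition _ := GRing.Zmodule_isLmodule.Build K V
  small_scaleA small_scale1 small_scaleDr small_scaleDl.

Lemma to_dual_linear a (u v : V) :
  to_dual (a *: u + v) = dual_add (dual_scale a (to_dual u)) (to_dual v).
Proof.
change (to_dual (small_add (small_scale a u) v) =
  dual_add (dual_scale a (to_dual u)) (to_dual v)).
by rewrite /small_add /small_scale !of_dualK.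
Qed.

End SmallCopy.
End DualVectorSpace.

Lemma separated_embeds : dual_well_defined M -> separated M ->
  exists V : lmodType K, embeds_in_vdual M V.
Proof.
move=> HM sep; have [X [f f_inj]] := HM (Kalg K).
exists (small_dual f_inj).
exists (fun (S : comAlgType K) (m : kobj M S) (v : small_dual f_inj) =>
  dev (to_dual v) (in_alg S : {lrmorphism Kalg K -> S}) m); split.
- by move=> S m a u v; rewrite to_dual_linear.
- by move=> S s m m' v; rewrite devD devZ.
- by move=> S T g m v; apply: (dev_nat _ (phi := in_alg S) (phi' := in_alg T) (rmorph_alg g)).
- move=> S m1 m2 m12; apply: (separated_to_sch_mono sep); apply/funext => w.
  by have := congr1 (fun h => h (of_dual f_inj w)) m12; rewrite /= of_dualK.
Qed.

Lemma embeds_separated (V : lmodType K) : embeds_in_vdual M V -> separated M.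
Proof.
move=> [h [_ hS hnat hinj]] S m m0.
have h0 T v : h T 0 v = 0.
  have := hS T 1 0 0 v; rewrite scaler0 addr0 mul1r => h00.
  by apply: (addIr (h T 0 v)); rewrite add0r -h00.
have [v hv] : exists v, h S m v != 0.
  apply: contrapT => hm0; move/eqP: m0; apply; apply: hinj; apply/funext => w.
  by rewrite h0; apply: contrapT => hw; apply: hm0; exists w; apply/eqP.
pose d (T : comAlgType K) (_ : {lrmorphism S -> T}) (x : kobj M T) := h T x v.
have dD T psi x y : @d T psi (x + y) = d T psi x + d T psi y.
  by have := hS T 1 x y v; rewrite scale1r mul1r.
have dZ T psi t x : @d T psi (t *: x) = t * d T psi x.
  by rewrite /d -[t *: x]addr0 hS h0 addr0.
have dnat (T T' : comAlgType K) (phi : {lrmorphism S -> T}) (phi' : {lrmorphism S -> T'})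
    (g : {lrmorphism T -> T'}) (_ : forall s, g (phi s) = phi' s) x :
  d T' phi' (kmap g x) = g (d T phi x) by apply: hnat.
by exists S, idfun, (DualPt dD dZ dnat); rewrite /= /d kmap_id.
Qed.

End DualPoints.

Theorem proposition4p4 (K : fieldType) (M : kmod K)
    (HM : dual_well_defined M) :
  (separated M <-> to_sch_mono M) /\
  (separated M <-> exists V : lmodType K, embeds_in_vdual M V).
Proof.
split; split.
- exact: separated_to_sch_mono.
- exact: to_sch_mono_separated.
- exact: separated_embeds.
- by case=> V; apply: embeds_separated.
Qed.
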